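(* Let $k\ge 1$ and let $(N,E)$ be a $(k+1)$-set-homogeneous $k$-hypergraph. If $U,V\subseteq N$ satisfy $|U|=|V|=k+1$ and $U$ and $V$ contain the same number of edges of $(N,E)$, then there is $g\in\mathrm{Aut}(N,E)$ with $U^g=V$.
   Context: A $k$-hypergraph is a pair $(N,E)$ with $N$ countable and $E$ a set of $k$-element subsets of $N$ (edges). A structure is $t$-set-homogeneous if whenever $U,V\subseteq N$ with $|U|=|V|=t$ carry isomorphic induced substructures, there is an automorphism $g$ with $U^g=V$. *)

From HB Require Import structures.
From mathcomp Require Import all_boot all_order.
From mathcomp Require Import finmap.
Set Implicit Arguments. Unset Strict Implicit. Unset Printing Implicit Defensive.
Local Open Scope fset_scope.

Definition is_hypergraph (N : countType) (k : nat) (E : pred {fset N}) : Prop :=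
  forall e : {fset N}, E e -> #|` e| = k.

Definition is_aut (N : countType) (E : pred {fset N}) (g : N -> N) : Prop :=
  bijective g /\ forall e : {fset N}, E (g @` e) = E e.

Definition induced_iso (N : countType) (E : pred {fset N}) (U V : {fset N})
    (f : N -> N) : Prop :=
  {in U &, injective f} /\ f @` U = V /\
  forall e : {fset N}, e `<=` U -> E (f @` e) = E e.

Definition set_homogeneous (N : countType) (E : pred {fset N}) (t : nat) : Prop :=
  forall U V : {fset N}, #|` U| = t -> #|` V| = t ->
    (exists f : N -> N, induced_iso E U V f) ->
    exists g : N -> N, is_aut E g /\ g @` U = V.

Definition edges_in (N : countType) (E : pred {fset N}) (U : {fset N}) : nat :=
  #|` [fset e in fpowerset U | E e]|.

From mathcomp Require Import all_boot all_order.
From mathcomp Require Import finmap.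

Set Implicit Arguments.
Unset Strict Implicit.
Unset Printing Implicit Defensive.
Local Open Scope fset_scope.

(* Inside a (k+1)-set U every edge is some U \ x, so the edges of U correspond
   to the points x of U for which U \ x is an edge.  If U and V have equally
   many edges, a bijection U -> V can be chosen that matches these points, hence
   maps U \ x to V \ f x with the same edge status; all other subsets of U are
   non-edges for cardinality reasons.  Thus f is an isomorphism of the induced
   substructures, and (k+1)-set-homogeneity yields the automorphism. *)

Section SeqTransfer.
Variable K : eqType.

Lemma index_filter_predC (P : pred K) (s : seq K) x : x \in s ->
  P x = (index x (filter P s ++ filter (predC P) s) < count P s).
Proof.
move=> xs; rewrite index_cat mem_filter xs andbT -size_filter.
case Px: (P x); first by rewrite index_mem mem_filter Px xs.
by rewrite ltnNge leq_addr.
Qed.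

Definition seq_transfer (s t : seq K) (x : K) : K := nth x t (index x s).

Variables s t : seq K.
Hypotheses (s_uniq : uniq s) (t_uniq : uniq t) (size_st : size s = size t).

Lemma index_seq_transfer x : x \in s -> index (seq_transfer s t x) t = index x s.
Proof. by move=> xs; rewrite index_uniq // -size_st index_mem. Qed.

Lemma mem_seq_transfer x : x \in s -> seq_transfer s t x \in t.
Proof. by move=> xs; rewrite mem_nth // -size_st index_mem. Qed.

Lemma seq_transfer_inj : {in s &, injective (seq_transfer s t)}.
Proof.
move=> x y xs ys /(congr1 (index^~ t)).
by rewrite !index_seq_transfer // => /(congr1 (nth x s)); rewrite !nth_index.
Qed.

Lemma seq_transfer_onto y : y \in t -> exists2 x, x \in s & seq_transfer s t x = y.
Proof.
move=> yt; have iy : index y t < size s by rewrite size_st index_mem.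
exists (nth y s (index y t)); first exact: mem_nth.
by rewrite /seq_transfer index_uniq // (set_nth_default y) ?nth_index // -size_st.
Qed.

End SeqTransfer.

Section FsetBijection.
Variable K : choiceType.

Lemma card_fset_sep (U : {fset K}) (P : pred K) :
  #|` [fset x in U | P x]| = count P (enum_fset U).
Proof.
have -> : [fset x in U | P x] = [fset x in filter P (enum_fset U)].
  by apply/fsetP => x; rewrite !inE mem_filter andbC.
by rewrite card_fseq undup_id ?size_filter // filter_uniq // fset_uniq.
Qed.

(* List the points of U satisfying P first, and those of V satisfying Q first;
   matching the two lists position by position gives the bijection. *)
Lemma fset_bij_count (U V : {fset K}) (P Q : pred K) : #|` U| = #|` V| ->
  count P (enum_fset U) = count Q (enum_fset V) ->
  exists f : K -> K,
    [/\ {in U &, injective f}, f @` U = V & {in U, forall x, Q (f x) = P x}].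
Proof.
move=> cardUV countPQ.
set sU := filter P (enum_fset U) ++ filter (predC P) (enum_fset U).
set sV := filter Q (enum_fset V) ++ filter (predC Q) (enum_fset V).
have permU : perm_eq sU (enum_fset U) by rewrite perm_filterC.
have permV : perm_eq sV (enum_fset V) by rewrite perm_filterC.
have memU x : (x \in sU) = (x \in U) by rewrite (perm_mem permU).
have memV y : (y \in sV) = (y \in V) by rewrite (perm_mem permV).
have uU : uniq sU by rewrite (perm_uniq permU) fset_uniq.
have uV : uniq sV by rewrite (perm_uniq permV) fset_uniq.
have sizeUV : size sU = size sV by rewrite (perm_size permU) (perm_size permV).
exists (seq_transfer sU sV); split.
- by move=> x y; rewrite -!memU; apply: seq_transfer_inj.
- apply/fsetP => y; apply/imfsetP/idP => [[x /= xU ->]|].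
    by rewrite -memV mem_seq_transfer ?memU.
  by rewrite -memV => /(seq_transfer_onto uU sizeUV)[x]; rewrite memU; exists x.
- move=> x xU; rewrite (index_filter_predC P xU) -/sU countPQ.
  have fxV : seq_transfer sU sV x \in V by rewrite -memV mem_seq_transfer ?memU.
  by rewrite (index_filter_predC Q fxV) -/sV index_seq_transfer ?memU.
Qed.

Lemma fsetD1_of_card (k : nat) (U e : {fset K}) :
  e `<=` U -> #|` U| = k.+1 -> #|` e| = k -> exists2 x, x \in U & e = U `\ x.
Proof.
move=> eU cardU carde.
have /cardfs1P[x Ue_x] : #|` U `\` e| == 1 by rewrite cardfsDS // cardU carde subSnn.
have : x \in U `\` e by rewrite Ue_x inE.
by rewrite inE => /andP[_ xU]; exists x; rewrite // -Ue_x fsetDK.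
Qed.

Lemma imfsetD1 (f : K -> K) (U : {fset K}) x : {in U &, injective f} -> x \in U ->
  f @` (U `\ x) = f @` U `\ f x.
Proof.
move=> finj xU; apply/fsetP => y; rewrite in_fsetD1.
apply/imfsetP/andP => [[z /= /fsetD1P[zx zU] ->]|[yfx /imfsetP[z /= zU yz]]].
  by rewrite in_imfset // (inj_in_eq finj).
by exists z => //; apply/fsetD1P; split=> //; apply: contraNneq yfx => <-; rewrite yz.
Qed.

End FsetBijection.

Section Hypergraph.
Variables (N : countType) (k : nat) (E : pred {fset N}).
Hypothesis E_hypergraph : is_hypergraph k E.

Lemma edges_in_count (U : {fset N}) : #|` U| = k.+1 ->
  edges_in E U = count (fun x => E (U `\ x)) (enum_fset U).
Proof.
move=> cardU; rewrite -card_fset_sep /edges_in.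
have -> : [fset e in fpowerset U | E e] = [fset U `\ x | x in [fset x in U | E (U `\ x)]].
  apply/fsetP => e; apply/idP/imfsetP => [|[x /=]].
    rewrite !inE fpowersetE => /andP[eU Ee].
    have [x xU eUx] := fsetD1_of_card eU cardU (E_hypergraph Ee).
    by exists x => //; rewrite !inE xU -eUx.
  by rewrite !inE => /andP[_ Ex] ->; rewrite fpowersetE fsubD1set Ex.
apply: card_in_imfset => x y /=; rewrite !inE => /andP[xU _] _ Uxy.
apply/eqP; apply: contraT => xy.
have : x \in U `\ y by rewrite in_fsetD1 xy xU.
by rewrite -Uxy in_fsetD1 eqxx.
Qed.

Lemma induced_iso_of_fsetD1 (U V : {fset N}) (f : N -> N) : #|` U| = k.+1 ->
  {in U &, injective f} -> f @` U = V ->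
  {in U, forall x, E (V `\ f x) = E (U `\ x)} -> induced_iso E U V f.
Proof.
move=> cardU finj fUV fE; split=> //; split=> // e eU.
have [carde|carde] := eqVneq #|` e| k.
  have [x xU ->] := fsetD1_of_card eU cardU carde.
  by rewrite imfsetD1 // fUV fE.
have card_fe : #|` f @` e| = #|` e|.
  by apply: card_in_imfset => x y xe ye; apply: finj; apply: (fsubsetP eU).
have nonedge e' : #|` e'| != k -> E e' = false.
  by move=> cardNk; apply: contraNF cardNk => /E_hypergraph ->.
by rewrite !nonedge ?card_fe.
Qed.

End Hypergraph.

Theorem lemma3p3 (N : countType) (k : nat) (E : pred {fset N}) :
  1 <= k ->
  is_hypergraph k E ->
  set_homogeneous E k.+1 ->
  forall U V : {fset N}, #|` U| = k.+1 -> #|` V| = k.+1 ->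
    edges_in E U = edges_in E V ->
    exists g : N -> N, is_aut E g /\ g @` U = V.
Proof.
move=> _ E_hypergraph homogeneous U V cardU cardV edgesUV.
apply: homogeneous => //.
rewrite (edges_in_count E_hypergraph cardU) (edges_in_count E_hypergraph cardV) in edgesUV.
have [f [finj fUV fE]] := fset_bij_count (etrans cardU (esym cardV)) edgesUV.
exists f; apply: (induced_iso_of_fsetD1 E_hypergraph cardU finj fUV).
by move=> x xU; rewrite -fE // -fUV.
Qed.
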